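(* Let $\mathcal{C}=(\mathcal{T},\mathcal{I},\mathcal{R})$ be an extraction context with thresholds \textit{minsupp} and \textit{minbond}. Then $\mathcal{MM}ax\mathcal{CR}=\mathcal{MRCP}\cup\mathcal{M}ax\mathcal{CRCP}$, with each element $J$ recorded together with $\mathit{Supp}(\wedge J)$ and $\mathit{bond}(J)$, is an exact concise representation of the set $\mathcal{RCP}$ of rare correlated patterns.
   Context: An extraction context is a triple $\mathcal{C}=(\mathcal{T},\mathcal{I},\mathcal{R})$ with $\mathcal{T}$ a finite set of transactions, $\mathcal{I}$ a finite set of items and $\mathcal{R}\subseteq\mathcal{T}\times\mathcal{I}$. For a pattern $I\subseteq\mathcal{I}$: $\mathit{Supp}(\wedge I)=|\{t:\forall i\in I,(t,i)\in\mathcal{R}\}|$, $\mathit{Supp}(\vee I)=|\{t:\exists i\in I,(t,i)\in\mathcal{R}\}|$, and for nonempty $I$, $\mathit{bond}(I)=\mathit{Supp}(\wedge I)/\mathit{Supp}(\vee I)$ (with $\mathit{bond}(\emptyset)=+\infty$ by convention). $\mathcal{CP}=\{I:\mathit{bond}(I)\ge\textit{minbond}\}$; $\mathcal{RCP}=\{I\in\mathcal{CP}:\mathit{Supp}(\wedge I)<\textit{minsupp}\}$. $\mathcal{CRCP}=\{I\in\mathcal{RCP}:\forall I_1\supsetneq I,\ \mathit{bond}(I)>\mathit{bond}(I_1)\}$; $\mathcal{MRCP}=\{I\in\mathcal{RCP}:\forall I_1\subsetneq I,\ \mathit{bond}(I)<\mathit{bond}(I_1)\}$. Maximal correlated patterns: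 $\mathcal{M}ax\mathcal{CP}=\{I\in\mathcal{CP}:\forall I_1\supsetneq I,\ \mathit{bond}(I_1)<\textit{minbond}\}$. $\mathcal{M}ax\mathcal{CRCP}=\mathcal{CRCP}\cap\mathcal{M}ax\mathcal{CP}$. A family $\mathcal{S}\subseteq\mathcal{RCP}$, with each $J\in\mathcal{S}$ recorded together with $\mathit{Supp}(\wedge J)$ and $\mathit{bond}(J)$, is an exact concise representation of $\mathcal{RCP}$ if, for every pattern $I\subseteq\mathcal{I}$, the recorded data alone suffice to decide whether $I\in\mathcal{RCP}$ and, when $I\in\mathcal{RCP}$, to determine exactly $\mathit{Supp}(\wedge I)$ and $\mathit{bond}(I)$. *)

From mathcomp Require Import all_boot all_order all_algebra.
Set Implicit Arguments. Unset Strict Implicit. Unset Printing Implicit Defensive.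
Import Order.TTheory GRing.Theory Num.Theory.
Local Open Scope ring_scope.

(* Extended rationals: [None] stands for +oo, [Some q] for the finite value q. *)
Definition ext_le (a b : option rat) : bool :=
  match a, b with
  | _, None => true
  | None, Some _ => false
  | Some x, Some y => x <= y
  end.

Definition ext_lt (a b : option rat) : bool :=
  match a, b with
  | None, _ => false
  | Some _, None => true
  | Some x, Some y => x < y
  end.

Section ExtractionContext.
Variables (Tr Item : finType) (Rel : {set Tr * Item}).

Definition supp_conj (X : {set Item}) : nat :=
  #|[set t : Tr | [forall i in X, (t, i) \in Rel]]|.

Definition supp_disj (X : {set Item}) : nat :=
  #|[set t : Tr | [exists i in X, (t, i) \in Rel]]|.

(* bond(empty) = +oo; otherwise Supp(/\X) / Supp(\/X) (MathComp: x / 0 = 0). *)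
Definition bond (X : {set Item}) : option rat :=
  if X == set0 then None
  else Some ((supp_conj X)%:R / (supp_disj X)%:R).

Variables (minsupp : nat) (minbond : rat).

Definition CP : {set {set Item}} :=
  [set X : {set Item} | ext_le (Some minbond) (bond X)].

Definition RCP : {set {set Item}} :=
  [set X in CP | (supp_conj X < minsupp)%N].

Definition CRCP : {set {set Item}} :=
  [set X in RCP | [forall X1 : {set Item}, (X \proper X1) ==> ext_lt (bond X1) (bond X)]].

Definition MRCP : {set {set Item}} :=
  [set X in RCP | [forall X1 : {set Item}, (X1 \proper X) ==> ext_lt (bond X) (bond X1)]].

Definition MaxCP : {set {set Item}} :=
  [set X in CP | [forall X1 : {set Item}, (X \proper X1) ==> ext_lt (bond X1) (Some minbond)]].

Definition MaxCRCP : {set {set Item}} := CRCP :&: MaxCP.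

Definition MMaxCR : {set {set Item}} := MRCP :|: MaxCRCP.

Definition record (S : {set {set Item}}) (J : {set Item}) : option (nat * option rat) :=
  if J \in S then Some (supp_conj J, bond J) else None.

End ExtractionContext.

Definition exact_concise_rep (Item : finType) (minsupp : nat) (minbond : rat)
  (S : forall Tr : finType, {set Tr * Item} -> {set {set Item}}) : Prop :=
  (forall (Tr : finType) (Rel : {set Tr * Item}),
      S Tr Rel \subset RCP Rel minsupp minbond) /\
  exists dec : ({set Item} -> option (nat * option rat)) ->
               {set Item} -> option (nat * option rat),
    forall (Tr : finType) (Rel : {set Tr * Item}) (X : {set Item}),
      dec (record Rel (S Tr Rel)) X =
      (if X \in RCP Rel minsupp minbond
       then Some (supp_conj Rel X, bond Rel X) else None).

From mathcomp Require Import all_boot all_order all_algebra.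
From mathcomp Require Import zify.
Set Implicit Arguments. Unset Strict Implicit. Unset Printing Implicit Defensive.
Import Order.TTheory GRing.Theory Num.Theory.

(* Supp(/\X) and the bond are both antitone, so RCP is convex for inclusion: a
   pattern lies in RCP iff it lies between a recorded subset (which makes it
   rare) and a recorded superset (which makes it correlated).  Every rare
   correlated X is below a maximal correlated superset, which belongs to
   MaxCRCP, and above a smallest subset of the same bond, which belongs to
   MRCP.  Along an inclusion, equal bonds force equal conjunctive supports, so
   bond(X) is the least recorded bond of a subset of X and Supp(/\X) is read
   off any subset attaining it. *)

Lemma ext_ltNge a b : ext_lt a b = ~~ ext_le b a.
Proof. by case: a b => [x|] [y|] //=; rewrite ltNge. Qed.

Lemma ext_le_anti a b : ext_le a b -> ext_le b a -> a = b.
Proof. by case: a b => [x|] [y|] //= xy yx; congr Some; apply/eqP; rewrite eq_le xy. Qed.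

Lemma ext_le_trans a b c : ext_le a b -> ext_le b c -> ext_le a c.
Proof. by case: a b c => [x|] [y|] [z|] //=; apply: le_trans. Qed.

Lemma ext_lt_le_trans a b c : ext_lt a b -> ext_le b c -> ext_lt a c.
Proof.
rewrite !ext_ltNge => /negP ba bc; apply/negP => ca.
exact/ba/(ext_le_trans bc ca).
Qed.

Section Context.
Variables (Tr Item : finType) (Rel : {set Tr * Item}).
Implicit Types K X Y J : {set Item}.

Lemma supp_conj_antitone X Y : X \subset Y -> supp_conj Rel Y <= supp_conj Rel X.
Proof.
move=> XY; apply/subset_leq_card/subsetP => t; rewrite !inE => /forall_inP tY.
by apply/forall_inP => i /(subsetP XY); apply: tY.
Qed.

Lemma supp_disj_monotone X Y : X \subset Y -> supp_disj Rel X <= supp_disj Rel Y.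
Proof.
move=> XY; apply/subset_leq_card/subsetP => t; rewrite !inE.
by case/exists_inP => i /(subsetP XY) iY ti; apply/exists_inP; exists i.
Qed.

Lemma supp_conj_le_disj X : X != set0 -> supp_conj Rel X <= supp_disj Rel X.
Proof.
case/set0Pn => i iX; apply/subset_leq_card/subsetP => t; rewrite !inE.
by move=> /forall_inP tX; apply/exists_inP; exists i; last exact: tX.
Qed.

Lemma bond_set0 : bond Rel set0 = None.
Proof. by rewrite /bond eqxx. Qed.

Lemma bond_neq0 X : X != set0 ->
  bond Rel X = Some ((supp_conj Rel X)%:R / (supp_disj Rel X)%:R)%R.
Proof. by move=> X0; rewrite /bond (negbTE X0). Qed.

Lemma subset_neq0 X Y : X \subset Y -> X != set0 -> Y != set0.
Proof. by move=> XY; apply: contraNneq => Y0; rewrite -subset0 -Y0. Qed.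

Lemma bond_antitone X Y : X \subset Y -> ext_le (bond Rel Y) (bond Rel X).
Proof.
move=> XY; have [->|X0] := eqVneq X set0; first by rewrite bond_set0; case: bond.
rewrite (bond_neq0 X0) (bond_neq0 (subset_neq0 XY X0)) /=.
have cYX := supp_conj_antitone XY; have dXY := supp_disj_monotone XY.
have cdX := supp_conj_le_disj X0.
have [dX0|dX_gt0] := posnP (supp_disj Rel X).
  have [cX0 cY0] : supp_conj Rel X = 0 /\ supp_conj Rel Y = 0 by lia.
  by rewrite cX0 cY0 !mul0r.
rewrite ler_pdivrMr ?ltr0n ?(leq_trans dX_gt0) // mulrAC ler_pdivlMr ?ltr0n //.
by rewrite -!natrM ler_nat leq_mul.
Qed.

Lemma bond_eq_supp_conj X Y : X \subset Y ->
  bond Rel X = bond Rel Y -> supp_conj Rel X = supp_conj Rel Y.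
Proof.
have [->|Y0] := eqVneq Y set0; first by rewrite subset0 => /eqP ->.
have [->|X0] := eqVneq X set0; first by rewrite bond_set0 bond_neq0.
move=> XY.
rewrite (bond_neq0 X0) (bond_neq0 Y0) => -[] /eqP.
have cYX := supp_conj_antitone XY; have dXY := supp_disj_monotone XY.
have cdX := supp_conj_le_disj X0; have cdY := supp_conj_le_disj Y0.
have [cX0|cX_gt0] := posnP (supp_conj Rel X); first by lia.
rewrite eqr_div ?pnatr_eq0 -?lt0n ?(leq_trans cX_gt0) //; last by lia.
by rewrite -!natrM eqr_nat => /eqP; nia.
Qed.

Variables (minsupp : nat) (minbond : rat).

Lemma RCP_between K X J : K \subset X -> X \subset J ->
  K \in RCP Rel minsupp minbond -> J \in RCP Rel minsupp minbond ->
  X \in RCP Rel minsupp minbond.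
Proof.
rewrite !inE => KX XJ /andP[_ K_rare] /andP[J_corr _].
rewrite (ext_le_trans J_corr (bond_antitone XJ)).
exact: leq_ltn_trans (supp_conj_antitone KX) K_rare.
Qed.

Lemma MMaxCR_sub_RCP : MMaxCR Rel minsupp minbond \subset RCP Rel minsupp minbond.
Proof. by apply/subsetP => X /setUP[/setIdP[]|/setIP[/setIdP[]]]. Qed.

Lemma RCP_MaxCP_MaxCRCP J : J \in RCP Rel minsupp minbond ->
  J \in MaxCP Rel minbond -> J \in MaxCRCP Rel minsupp minbond.
Proof.
move=> JR /[dup] JM /setIdP[J_corr /forallP J_max]; rewrite inE JM andbT inE JR.
apply/forallP => X1; apply/implyP => /(implyP (J_max X1)) X1_uncorr.
by apply: ext_lt_le_trans X1_uncorr _; rewrite inE in J_corr.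
Qed.

Lemma RCP_MaxCRCP_superset X : X \in RCP Rel minsupp minbond ->
  exists2 J, J \in MaxCRCP Rel minsupp minbond & X \subset J.
Proof.
move=> /[dup] XR /setIdP[X_corr X_rare].
have XX : (X \subset X) && (X \in CP Rel minbond) by rewrite subxx X_corr.
have [J /andP[XJ J_corr] J_max] :=
  @arg_maxnP _ X (fun J => (X \subset J) && (J \in CP Rel minbond))
    (fun J => #|J|) XX.
exists J => //; apply: RCP_MaxCP_MaxCRCP.
  by rewrite inE J_corr (leq_ltn_trans (supp_conj_antitone XJ)).
rewrite inE J_corr; apply/forallP => X1; apply/implyP => JX1.
rewrite ext_ltNge; apply: contraL (proper_card JX1) => X1_corr; rewrite -leqNgt.
by apply: J_max; rewrite (subset_trans XJ (proper_sub JX1)) inE.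
Qed.

Lemma RCP_MRCP_subset X : X \in RCP Rel minsupp minbond ->
  exists K, [/\ K \in MRCP Rel minsupp minbond, K \subset X & bond Rel K = bond Rel X].
Proof.
move=> XR.
have XX : (X \subset X) && (bond Rel X == bond Rel X) by rewrite subxx eqxx.
have [K /andP[KX /eqP bKX] K_min] :=
  @arg_minnP _ X (fun K => (K \subset X) && (bond Rel K == bond Rel X))
    (fun K => #|K|) XX.
exists K; split => //; apply/setIdP; split.
  by move: XR; rewrite !inE bKX (bond_eq_supp_conj KX bKX).
apply/forallP => X1; apply/implyP => X1K; rewrite ext_ltNge; apply/negP => bX1K.
have bX1 : bond Rel X1 = bond Rel X.
  by rewrite -bKX; apply: ext_le_anti bX1K (bond_antitone (proper_sub X1K)).
have := K_min X1; rewrite (subset_trans (proper_sub X1K) KX) bX1 eqxx.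
by rewrite leqNgt proper_card // => /(_ isT).
Qed.

End Context.

Section Decoding.
Variable Item : finType.
Implicit Types (r : {set Item} -> option (nat * option rat)) (K X J : {set Item}).

Definition recorded_bond r K : option rat := if r K is Some (_, b) then b else None.

Definition recorded_below r X K : bool := (K \subset X) && (r K != None).

Definition decode r X : option (nat * option rat) :=
  if [exists J, (r J != None) && (X \subset J)] then
    if [pick K | recorded_below r X K &
                 [forall K', recorded_below r X K' ==>
                               ext_le (recorded_bond r K) (recorded_bond r K')]]
    is Some K then r K else None
  else None.

End Decoding.

Section DecodeRecord.
Variables (Tr Item : finType) (Rel : {set Tr * Item}) (minsupp : nat) (minbond : rat).
Variable S : {set {set Item}}.
Hypothesis S_sub_RCP : S \subset RCP Rel minsupp minbond.
Hypothesis RCP_upper : forall X, X \in RCP Rel minsupp minbond ->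
  exists2 J, J \in S & X \subset J.
Hypothesis RCP_lower : forall X, X \in RCP Rel minsupp minbond ->
  exists K, [/\ K \in S, K \subset X & bond Rel K = bond Rel X].

Lemma record_neq_None K : (record Rel S K != None) = (K \in S).
Proof. by rewrite /record; case: (K \in S). Qed.

Lemma recorded_bond_record K : K \in S -> recorded_bond (record Rel S) K = bond Rel K.
Proof. by rewrite /recorded_bond /record => ->. Qed.

Lemma recorded_below_record X K :
  recorded_below (record Rel S) X K = (K \subset X) && (K \in S).
Proof. by rewrite /recorded_below record_neq_None. Qed.

Lemma decode_record X :
  decode (record Rel S) X =
  if X \in RCP Rel minsupp minbond then Some (supp_conj Rel X, bond Rel X) else None.
Proof.
rewrite /decode; have [XR|XnR] := boolP (X \in RCP Rel minsupp minbond).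
  have [J JS XJ] := RCP_upper XR.
  rewrite ifT; last by apply/existsP; exists J; rewrite record_neq_None JS.
  have [K0 [K0S K0X bK0]] := RCP_lower XR.
  case: pickP => [K /andP[] | no_min].
    rewrite recorded_below_record => /andP[KX KS] /forallP K_min.
    have := implyP (K_min K0); rewrite recorded_below_record K0X K0S.
    rewrite !recorded_bond_record // bK0 => /(_ isT) bKX.
    have bK : bond Rel K = bond Rel X by apply: ext_le_anti bKX (bond_antitone Rel KX).
    by rewrite /record KS (bond_eq_supp_conj KX bK) bK.
  have /negP[] := negbT (no_min K0).
  rewrite recorded_below_record K0X K0S; apply/forallP => K'.
  rewrite recorded_below_record; apply/implyP => /andP[K'X K'S].
  by rewrite !recorded_bond_record // bK0 bond_antitone.
case: ifP => // /existsP[J /andP[JS XJ]]; case: pickP => // K /andP[] + _.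
rewrite recorded_below_record => /andP[KX KS]; rewrite record_neq_None in JS.
by case/negP: XnR; apply: RCP_between KX XJ _ _; apply: (subsetP S_sub_RCP).
Qed.

End DecodeRecord.

Theorem mainTheorem6 (Item : finType) (minsupp : nat) (minbond : rat) :
  exact_concise_rep minsupp minbond
    (fun (Tr : finType) (Rel : {set Tr * Item}) => MMaxCR Rel minsupp minbond).
Proof.
split=> [Tr Rel|]; first exact: MMaxCR_sub_RCP.
exists (@decode Item) => Tr Rel X; apply: decode_record => [|Y YR|Y YR].
- exact: MMaxCR_sub_RCP.
- by have [J JM YJ] := RCP_MaxCRCP_superset YR; exists J; rewrite // inE JM orbT.
- by have [K [KM KY bK]] := RCP_MRCP_subset YR; exists K; rewrite inE KM.
Qed.
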